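(* Let $X$ be a Hausdorff topological space. Then $X$ is totally disconnected and locally compact if and only if its symmetric pseudogroup $\mathscr{I}(X)$ is algebraic.
   Context: The symmetric pseudogroup $\mathscr{I}(X)$ is the set of all homeomorphisms $f:U\to V$ between open subsets $U=\mathrm{dom}(f)$ and $V$ of $X$, with product: for $f:U\to V$ and $f_1:U_1\to V_1$, $f_1\cdot f : x\mapsto f_1(f(x))$ defined on $f^{-1}(V\cap U_1)$ with values in $f_1(V\cap U_1)$; it is an inverse semigroup with $f^*=f^{-1}$. Its intrinsic order is $f\leqslant g$ iff $f=g|_U$ for some open $U\subseteq\mathrm{dom}(g)$. In a poset, $x$ is way-below $y$ ($x\ll y$) if for every directed subset $D$ (nonempty, any two elements having an upper bound in $D$) that has a supremum with $y\leqslant\sup D$, there is $d\in D$ with $x\leqslant d$. An element $k$ is compact if $k\ll k$; a poset is algebraic if every element is the supremum of the directed set of compact elements below it; $\mathscr{I}(X)$ is algebraic if it is so for its intrinsic order. *)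

From HB Require Import structures.
From mathcomp Require Import all_boot all_order all_algebra.
From mathcomp Require Import all_classical all_reals all_analysis.
Set Implicit Arguments. Unset Strict Implicit. Unset Printing Implicit Defensive.
Local Open Scope classical_set_scope.

Definition directed {T : Type} (le : T -> T -> Prop) (D : set T) : Prop :=
  (exists d, D d) /\
  (forall a b, D a -> D b -> exists2 c, D c & le a c /\ le b c).

Definition is_sup {T : Type} (le : T -> T -> Prop) (D : set T) (s : T) : Prop :=
  (forall d, D d -> le d s) /\
  (forall u, (forall d, D d -> le d u) -> le s u).

Definition way_below {T : Type} (le : T -> T -> Prop) (x y : T) : Prop :=
  forall (D : set T) (s : T), directed le D -> is_sup le D s -> le y s ->
    exists2 d, D d & le x d.

Definition compact_elt {T : Type} (le : T -> T -> Prop) (k : T) : Prop :=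
  way_below le k k.

Definition algebraic {T : Type} (le : T -> T -> Prop) : Prop :=
  forall x : T,
    directed le [set k | compact_elt le k /\ le k x] /\
    is_sup le [set k | compact_elt le k /\ le k x] x.

(* partial maps X -> X are represented as X -> option X *)
Definition pdom {X : Type} (f : X -> option X) : set X :=
  [set x | exists y, f x = Some y].

Definition ptotal {X : Type} (f : X -> option X) : X -> X :=
  fun x => odflt x (f x).

Definition partial_homeo {X : topologicalType} (f : X -> option X) : Prop :=
  exists g : X -> option X,
    [/\ forall x y, f x = Some y <-> g y = Some x,
        open (pdom f), open (pdom g),
        {within pdom f, continuous (ptotal f)} &
        {within pdom g, continuous (ptotal g)}].

Definition sym_pseudogroup (X : topologicalType) : Type :=
  {f : X -> option X | partial_homeo f}.

Definition intrinsic_le {X : topologicalType} (f g : sym_pseudogroup X) : Prop :=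
  pdom (proj1_sig f) `<=` pdom (proj1_sig g) /\
  forall x, pdom (proj1_sig f) x -> proj1_sig f x = proj1_sig g x.

From mathcomp Require Import all_boot all_order all_algebra.
From mathcomp Require Import all_classical all_reals all_analysis.
Local Open Scope classical_set_scope.

(* A partial homeomorphism is a compact element of I(X) exactly when its
   domain is compact: the domain of the supremum of a directed family is the
   union of their domains, so "way below" becomes the statement that every
   directed open cover of the domain has a member covering it.  Hence I(X) is
   algebraic iff the compact open sets form a base of X.  For Hausdorff X
   this holds iff X is totally disconnected and locally compact: if K is a
   compact neighbourhood of x, the intersection of the subsets of K that are
   clopen in K and contain x is connected, hence reduced to x, so by
   compactness one of them lies in a given open neighbourhood of x inside
   the interior of K, and it is then compact and open. *)

Section directed_covers.
Context {T : topologicalType}.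

Lemma compact_directedP (K : set T) : compact K <->
  (forall O : set (set T), directed subset O -> (forall U, O U -> open U) ->
     K `<=` \bigcup_(U in O) U -> exists2 U, O U & K `<=` U).
Proof.
split=> [cK O [[U0 OU0] Odir] Oop KO | Kdir F PF FK].
  apply: contrapT => noU.
  have KdiffU U : O U -> (K `\` U) !=set0.
    by move=> OU; apply/set0P/eqP; rewrite setD_eq0 => KU; apply: noU; exists U.
  pose G := filter_from O (fun U => K `\` U).
  have GF : ProperFilter G.
    apply: filter_from_proper => //; apply: filter_from_filter; first by exists U0.
    move=> U V OU OV; have [W OW [UW VW]] := Odir U V OU OV.
    by exists W => // z [Kz Wz]; split; split=> // ?; apply: Wz; [apply: UW|apply: VW].
  have [z [Kz clz]] : exists z, K z /\ cluster G z by apply: cK; exists U0 => // z [].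
  have [U OU Uz] := KO z Kz.
  have GU : G (K `\` U) by exists U.
  have [w [[_ nUw] Uw]] := clz _ _ GU (open_nbhs_nbhs (conj (Oop U OU) Uz)).
  exact: nUw.
apply: contrapT => noclust.
pose O := [set U : set T | open U /\ exists2 S, F S & U `&` S = set0].
have [U [oU [S FS US0]] KU] : exists2 U, O U & K `<=` U.
  apply: Kdir => [|U []//|z Kz].
    split.
      by exists set0; split; [exact: open0|exists setT; [exact: filterT|exact: set0I]].
    move=> U V [oU [S FS US]] [oV [S' FS' VS']].
    exists (U `|` V); last by split=> ?; [left|right].
    split; first exact: openU.
    exists (S `&` S'); first exact: filterI.
    apply/seteqP; split=> // y [[Uy|Vy] [Sy S'y]]; [rewrite -US|rewrite -VS']; by split.
  apply: contrapT => nUz; apply: noclust; exists z; split=> // A B FA.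
  rewrite nbhsE => -[V [oV Vz] VB].
  apply: contrapT => /set0P/negP; rewrite negbK => /eqP AB0.
  apply: nUz; exists V => //; split=> //; exists A => //.
  by apply/seteqP; split=> // y [Vy Ay]; rewrite -AB0; split=> //; exact: VB.
have [y [Ky Sy]] := filter_ex (filterI FK FS).
have : (U `&` S) y by split=> //; exact: KU.
by rewrite US0.
Qed.

Lemma compact_bigcap_sub {K O : set T} {C : set (set T)} : compact K ->
  directed (fun A B => B `<=` A) C -> (forall A, C A -> closed A /\ A `<=` K) ->
  open O -> \bigcap_(A in C) A `<=` O -> exists2 A, C A & A `<=` O.
Proof.
move=> cK [[A0 CA0] Cdir] Ccl oO CO.
have [_ [A CA <-] KOA] : exists2 U, [set O `|` ~` A | A in C] U & K `<=` U.
  apply: (compact_directedP K).1 => //.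
  - split; first by exists (O `|` ~` A0), A0.
    move=> _ _ [A CA <-] [B CB <-]; have [D CD [DA DB]] := Cdir A B CA CB.
    by exists (O `|` ~` D); [exists D|split; apply: setUS; apply: subsetC].
  - by move=> _ [A CA <-]; apply: openU => //; exact/closed_openC/(Ccl A CA).1.
  move=> z Kz; have [Oz|nOz] := pselect (O z).
    by exists (O `|` ~` A0); [exists A0|left].
  have [A CA nAz] : exists2 A, C A & ~ A z.
    apply: contrapT => nA; apply/nOz/CO => A CA.
    by apply: contrapT => nAz; apply: nA; exists A.
  by exists (O `|` ~` A); [exists A|right].
exists A => // z Az; have [//|] := KOA z ((Ccl A CA).2 z Az); exact.
Qed.

End directed_covers.

Section hausdorff_separation.
Context {T : topologicalType}.
Hypothesis hT : hausdorff_space T.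

Lemma compact_point_separated {P : set T} {y : T} : compact P -> ~ P y ->
  exists U V, [/\ open U, open V, P `<=` U, V y & U `&` V = set0].
Proof.
move=> cP nPy.
pose O := [set U | open U /\ exists V, [/\ open V, V y & U `&` V = set0]].
have [U [oU [V [oV Vy UV]]] PU] : exists2 U, O U & P `<=` U.
  apply: (compact_directedP P).1 => //; [split|by move=> U []|].
  - exists set0; split; first exact: open0.
    by exists setT; split; [exact: openT|by []|exact: set0I].
  - move=> U U' [oU [V [oV Vy UV]]] [oU' [V' [oV' V'y UV']]].
    exists (U `|` U'); last by split=> ?; [left|right].
    split; first exact: openU.
    exists (V `&` V'); split; [exact: openI|by []|].
    by apply/seteqP; split=> // z [[Uz|U'z] [Vz V'z]]; [rewrite -UV|rewrite -UV'].
  move=> p Pp; have pny : p != y by apply: contra_notN nPy => /eqP <-.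
  move: hT; rewrite open_hausdorff => /(_ p y pny) [[A B] /= [pA yB] [oA oB /eqP AB]].
  by exists A; [split=> //; exists B; split=> //; rewrite -inE|rewrite -inE].
by exists U, V.
Qed.

Lemma compact_separated {P R : set T} : compact P -> compact R ->
  P `&` R = set0 ->
  exists U V, [/\ open U, open V, P `<=` U, R `<=` V & U `&` V = set0].
Proof.
move=> cP cR PR.
pose O := [set V | open V /\ exists U, [/\ open U, P `<=` U & U `&` V = set0]].
have [V [oV [U [oU PU UV]]] RV] : exists2 V, O V & R `<=` V.
  apply: (compact_directedP R).1 => //; [split|by move=> V []|].
  - exists set0; split; first exact: open0.
    by exists setT; split; [exact: openT|by []|exact: setI0].
  - move=> V V' [oV [U [oU PU UV]]] [oV' [U' [oU' PU' UV']]].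
    exists (V `|` V'); last by split=> ?; [left|right].
    split; first exact: openU.
    exists (U `&` U'); split; first exact: openI.
      by move=> p Pp; split; [exact: PU|exact: PU'].
    by apply/seteqP; split=> // z [[Uz U'z] [Vz|V'z]]; [rewrite -UV|rewrite -UV'].
  move=> r Rr; have nPr : ~ P r by move=> Pr; rewrite -[False]/(set0 r) -PR.
  have [U [V [oU oV PU Vr UV]]] := compact_point_separated cP nPr.
  by exists V => //; split=> //; exists U.
by exists U, V.
Qed.

End hausdorff_separation.

Lemma separated_closedl {T : topologicalType} (A B : set T) :
  closed (A `|` B) -> separated A B -> closed A.
Proof.
move=> clAB [clAB0 _] z clAz.
have [//|Bz] : (A `|` B) z by apply: clAB; apply: closureS clAz => ? ?; left.
by have : (closure A `&` B) z by []; rewrite clAB0.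
Qed.

Section quasi_component.
Context {T : topologicalType}.
Variables (K : set T) (x : T).

Definition relclopen :=
  [set C : set T | [/\ C x, C `<=` K, closed C & closed (K `\` C)]].

Definition quasi_component := \bigcap_(C in relclopen) C.

Lemma quasi_component_refl : quasi_component x.
Proof. by move=> C []. Qed.

Lemma closed_quasi_component : closed quasi_component.
Proof. by apply: closed_bigI => C []. Qed.

Hypotheses (hT : hausdorff_space T) (cK : compact K) (Kx : K x).

Lemma relclopen_self : relclopen K.
Proof. by split=> //; [exact: compact_closed|rewrite setDv; exact: closed0]. Qed.

Lemma relclopen_directed : directed (fun A B => B `<=` A) relclopen.
Proof.
split; first by exists K; exact: relclopen_self.
move=> A B [Ax AK clA clKA] [Bx BK clB clKB]; exists (A `&` B); last by split=> ? [].
split=> //; [by move=> z [/AK]|exact: closedI|].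
by rewrite setDIr; exact: closedU.
Qed.

Lemma quasi_component_sub : quasi_component `<=` K.
Proof. by move=> z; apply; exact: relclopen_self. Qed.

Lemma quasi_component_sub_closed (P R : set T) : closed P -> closed R ->
  P `&` R = set0 -> quasi_component `<=` P `|` R -> P x -> quasi_component `<=` P.
Proof.
move=> clP clR PR QPR Px.
have clK := compact_closed hT cK.
have cPK := subclosed_compact (closedI clP clK) cK (@subIsetr _ P K).
have cRK := subclosed_compact (closedI clR clK) cK (@subIsetr _ R K).
have PKRK : (P `&` K) `&` (R `&` K) = set0.
  by apply/seteqP; split=> // z [[Pz _] [Rz _]]; rewrite -PR.
have [U [V [oU oV PU RV UV]]] := compact_separated hT cPK cRK PKRK.
have [C [Cx CK clC clKC] CUV] : exists2 C, relclopen C & C `<=` U `|` V.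
  apply: compact_bigcap_sub cK relclopen_directed _ (openU oU oV) _ => [A [] //|z Qz].
  have Kz := quasi_component_sub z Qz.
  by have [Pz|Rz] := QPR z Qz; [left; apply: PU|right; apply: RV].
have CU_V : C `&` U = C `\` V.
  apply/seteqP; split=> z [Cz Hz]; split=> //.
    by move=> Vz; rewrite -[False]/(set0 z) -UV.
  by have [|] := CUV z Cz.
have QCU : quasi_component `<=` C `&` U.
  move=> z; apply; split; [by split=> //; apply: PU|by move=> w [/CK]| |].
    by rewrite CU_V; apply: closedI => //; exact: open_closedC.
  rewrite setDIr; apply: closedU => //; rewrite setDE.
  by apply: closedI => //; exact: open_closedC.
move=> z Qz; have [//|Rz] := QPR z Qz.
have [_ Uz] := QCU z Qz.
have : (U `&` V) z by split=> //; apply: RV; split=> //; exact: quasi_component_sub z Qz.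
by rewrite UV.
Qed.

Lemma quasi_component_connected : connected quasi_component.
Proof.
apply/connectedP => E [E0 QE sepE].
have sep b : separated (E b) (E (~~ b)) by case: b; rewrite // separatedC.
have cov b : quasi_component = E b `|` E (~~ b) by case: b; rewrite QE // setUC.
have clE b : closed (E b).
  by apply: separated_closedl (sep b); rewrite -cov; exact: closed_quasi_component.
have notEx b : ~ E b x.
  move=> Ebx; have [y Ey] := E0 (~~ b).
  have QEb : quasi_component `<=` E b.
    apply: quasi_component_sub_closed (clE b) (clE (~~ b)) _ _ Ebx.
      exact: separated_disjoint.
    by rewrite -cov.
  have : (E b `&` E (~~ b)) y by split=> //; apply: QEb; rewrite (cov b); right.
  by rewrite (separated_disjoint (sep b)).
by have := quasi_component_refl; rewrite (cov false) => -[/notEx|/notEx].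
Qed.

Lemma totally_disconnected_quasi_component :
  totally_disconnected [set: T] -> quasi_component `<=` [set x].
Proof.
move=> td; rewrite -(td x I).
exact: connected_component_max quasi_component_refl (@subsetT _ _)
  quasi_component_connected.
Qed.

End quasi_component.

Definition compact_open_base (T : topologicalType) :=
  forall (x : T) (W : set T), open W -> W x ->
    exists C, [/\ compact C, open C, C x & C `<=` W].

Section compact_open_base.
Context {T : topologicalType}.
Hypothesis hT : hausdorff_space T.

Lemma locally_compact_nbhs (x : T) : locally_compact [set: T] ->
  exists2 K, nbhs x K & compact K.
Proof.
by move=> /(_ x I) [K xK [cK _]]; exists K => //; rewrite -[nbhs x]withinET.
Qed.

Lemma compact_open_base_tdlc : compact_open_base T ->
  totally_disconnected [set: T] /\ locally_compact [set: T].
Proof.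
move=> base; split.
  apply: zero_dimension_totally_disconnected => x y /eqP xy.
  have oy : open (~` [set y]).
    exact/closed_openC/accessible_closed_set1/hausdorff_accessible.
  have [C [cC oC Cx CW]] := base x _ oy xy.
  by exists C; split=> //; [split=> //; exact: compact_closed|move=> /CW; apply].
move=> x _; have [C [cC oC Cx _]] := base x setT openT I.
exists C; last by split=> //; exact: compact_closed.
by apply: filterS (open_nbhs_nbhs (conj oC Cx)) => y Cy _.
Qed.

Lemma tdlc_compact_open_base : totally_disconnected [set: T] ->
  locally_compact [set: T] -> compact_open_base T.
Proof.
move=> td lc x W oW Wx; have [K xK cK] := locally_compact_nbhs x lc.
have [C [Cx CK clC clKC] CWK] : exists2 C, relclopen K x C & C `<=` W `&` K°.
  apply: (compact_bigcap_sub cK (relclopen_directed _ _ hT cK (nbhs_singleton xK))).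
  - by move=> A [].
  - exact: openI oW (@open_interior _ K).
  move=> z /(totally_disconnected_quasi_component _ _ hT cK (nbhs_singleton xK) td) ->.
  by split.
exists C; split=> //; [exact: subclosed_compact clC cK CK| |by move=> z /CWK []].
have -> : C = K° `\` (K `\` C).
  apply/seteqP; split=> [z Cz|z [Kz nKCz]]; first by split=> [|[]//]; have [] := CWK z Cz.
  by apply: contrapT => nCz; apply: nKCz; split=> //; exact: interior_subset.
by apply: openI; [exact: open_interior|exact: closed_openC].
Qed.

End compact_open_base.

Section partial_restriction.
Context {X : topologicalType}.
Implicit Types (f : X -> option X) (U : set X).

Definition restr_fun f U : X -> option X :=
  fun x => if pselect (U x) then f x else None.

Lemma restr_funE f U x : U x -> restr_fun f U x = f x.
Proof. by rewrite /restr_fun; case: pselect. Qed.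

Lemma restr_funNE f U x : ~ U x -> restr_fun f U x = None.
Proof. by rewrite /restr_fun; case: pselect. Qed.

Lemma pdom_restr_fun f U : pdom (restr_fun f U) = pdom f `&` U.
Proof.
apply/seteqP; split=> x.
  move=> [y]; have [Ux|nUx] := pselect (U x); last by rewrite restr_funNE.
  by rewrite restr_funE // => fx; split=> //; exists y.
by move=> [[y fx] Ux]; exists y; rewrite restr_funE.
Qed.

Lemma restr_fun_continuous f U : {within pdom f, continuous (ptotal f)} ->
  {within pdom (restr_fun f U), continuous (ptotal (restr_fun f U))}.
Proof.
rewrite pdom_restr_fun => cf.
apply: (subspace_eq_continuous (f := from_subspace _ (ptotal f))).
  by move=> x; rewrite inE => -[_ Ux]; rewrite /from_subspace /ptotal restr_funE.
exact: continuous_subspaceW cf.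
Qed.

Lemma partial_homeo_restr f U : open U -> partial_homeo f ->
  partial_homeo (restr_fun f U).
Proof.
move=> oU [g [fg odf odg cf cg]].
exists (restr_fun g (ptotal g @^-1` U)); split.
- move=> x y; split.
    have [Ux|nUx] := pselect (U x); last by rewrite restr_funNE.
    by rewrite restr_funE // => /fg gyx; rewrite restr_funE // /preimage /= /ptotal gyx.
  have [Uy|nUy] := pselect ((ptotal g @^-1` U) y); last by rewrite restr_funNE.
  rewrite restr_funE // => /[dup] gyx /fg fxy.
  by move: Uy; rewrite /preimage /= /ptotal gyx /= => Ux; rewrite restr_funE.
- by rewrite pdom_restr_fun; exact: openI odf oU.
- rewrite pdom_restr_fun; apply: (continuous_inP _ odg).1 => //.
  by rewrite -continuous_open_subspace.
- exact: restr_fun_continuous.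
- exact: restr_fun_continuous.
Qed.

End partial_restriction.

Section symmetric_pseudogroup.
Context {X : topologicalType}.
Local Notation I := (sym_pseudogroup X).
Local Notation le := (@intrinsic_le X).
Local Notation dom f := (pdom (proj1_sig f)).
Implicit Types (f g k : I) (U : set X).

Lemma open_dom f : open (dom f).
Proof. by have [? []] := proj2_sig f. Qed.

Lemma intrinsic_le_refl f : le f f.
Proof. by split. Qed.

(* Restricting to [U°] rather than [U] makes [restr] total in [U]; the two
   agree on open sets. *)
Definition restr f U : I :=
  exist _ (restr_fun (proj1_sig f) U°)
    (partial_homeo_restr _ _ (open_interior U) (proj2_sig f)).

Lemma dom_restr f U : dom (restr f U) = dom f `&` U°.
Proof. exact: pdom_restr_fun. Qed.

Lemma dom_restr_sub f U : open U -> U `<=` dom f -> dom (restr f U) = U.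
Proof.
move=> oU Uf; rewrite dom_restr (interior_id U).1 //.
by apply/seteqP; split=> [z []//|z Uz]; split=> //; exact: Uf.
Qed.

Lemma restr_le f U : le (restr f U) f.
Proof.
split; first by rewrite dom_restr; exact: subIsetl.
by move=> x; rewrite dom_restr => -[_ Ux] /=; rewrite restr_funE.
Qed.

Lemma le_restr f g U : le g f -> dom g `<=` U° -> le g (restr f U).
Proof.
move=> [gf gfE] gU; split.
  by rewrite dom_restr => x gx; split; [exact: gf|exact: gU].
by move=> x gx /=; rewrite restr_funE; [exact: gfE|exact: gU].
Qed.

Lemma restrS f U V : U `<=` V -> le (restr f U) (restr f V).
Proof.
move=> UV; apply: le_restr; first exact: restr_le.
by rewrite dom_restr => x [_]; exact: interiorS.
Qed.

Lemma is_sup_cover (S : set I) f : (forall k, S k -> le k f) ->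
  dom f `<=` \bigcup_(k in S) dom k -> is_sup le S f.
Proof.
move=> Sf cov; split=> // g ub; split=> [x /cov [k Sk kx]|x fx].
  exact: (ub k Sk).1.
have [k Sk kx] := cov x fx.
by rewrite -(Sf k Sk).2 // (ub k Sk).2.
Qed.

Lemma dom_sup_cover {S : set I} {f} : is_sup le S f ->
  dom f `<=` \bigcup_(k in S) dom k.
Proof.
move=> [ub lub]; set V := \bigcup_(k in S) dom k.
have oV : open V by apply: bigcup_open => k _; exact: open_dom.
have le_fV : le f (restr f V).
  apply: lub => k Sk; apply: le_restr; first exact: ub.
  by rewrite (interior_id V).1 // => x kx; exists k.
by have [+ _] := le_fV; rewrite dom_restr (interior_id V).1 // => fV x /fV [].
Qed.

Lemma compact_eltP k : compact_elt le k <-> compact (dom k).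
Proof.
split=> [kc|ck].
  apply/(compact_directedP (dom k)) => O [[U0 OU0] Odir] Oop kO.
  pose D := [set restr k U | U in O].
  have Ddir : directed le D.
    split; first by exists (restr k U0), U0.
    move=> _ _ [U OU <-] [V OV <-]; have [W OW [UW VW]] := Odir U V OU OV.
    exists (restr k W); first by exists W.
    by split; exact: restrS.
  have Dk : is_sup le D k.
    apply: is_sup_cover => [_ [U _ <-]|x kx]; first exact: restr_le.
    have [U OU Ux] := kO x kx.
    exists (restr k U); first by exists U.
    by rewrite dom_restr (interior_id U).1 //; exact: Oop.
  have [_ [U OU <-] [kU _]] := kc D k Ddir Dk (intrinsic_le_refl k).
  by exists U => // x /kU; rewrite dom_restr => -[_ /interior_subset].
move=> D s Ddir Ds [ks ksE].
have [_ [d Dd <-] kd] : exists2 U, [set dom d | d in D] U & dom k `<=` U.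
  apply: (compact_directedP (dom k)).1 => //.
  - have [[d0 Dd0] dirD] := Ddir; split; first by exists (dom d0), d0.
    move=> _ _ [a Da <-] [b Db <-]; have [c Dc [[ac _] [bc _]]] := dirD a b Da Db.
    by exists (dom c); [exists c|].
  - by move=> _ [d _ <-]; exact: open_dom.
  by move=> x /ks /(dom_sup_cover Ds) [d Dd dx]; exists (dom d) => //; exists d.
exists d => //; split=> // x kx.
by rewrite ksE // -(Ds.1 d Dd).2 //; exact: kd.
Qed.

Lemma partial_homeo_Some : partial_homeo (@Some X).
Proof.
have domT : pdom (@Some X) = setT by apply/seteqP; split=> // x _; exists x.
exists Some; rewrite domT; split; [by move=> x y; split=> -[->]|exact: openT|exact: openT| |];
  by apply: continuous_subspaceT => x; exact: cvg_id.
Qed.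

Definition pg_id : I := exist _ Some partial_homeo_Some.

Lemma dom_pg_id : dom pg_id = setT.
Proof. by apply/seteqP; split=> // x _; exists x. Qed.

Lemma compact_open_base_algebraic : compact_open_base X -> algebraic le.
Proof.
move=> base f.
have cpt_restr U : open U -> compact U -> U `<=` dom f ->
    compact_elt le (restr f U) /\ le (restr f U) f.
  move=> oU cU Uf; split; last exact: restr_le.
  by apply/compact_eltP; rewrite dom_restr_sub.
split; [split|].
- by exists (restr f set0); apply: cpt_restr; [exact: open0|exact: compact0|].
- move=> a b [ca af] [cb bf]; have oab := openU (open_dom a) (open_dom b).
  exists (restr f (dom a `|` dom b)).
    apply: cpt_restr => //.
      exact: compactU ((compact_eltP a).1 ca) ((compact_eltP b).1 cb).
    by move=> x [/af.1|/bf.1].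
  split; apply: le_restr; rewrite // (interior_id _).1 // => x ?; by [left|right].
apply: is_sup_cover => [k []//|x fx].
have [C [cC oC Cx Cf]] := base x _ (open_dom f) fx.
by exists (restr f C); [exact: cpt_restr|rewrite dom_restr_sub].
Qed.

Lemma algebraic_compact_open_base : algebraic le -> compact_open_base X.
Proof.
move=> alg x W oW Wx.
have dW : dom (restr pg_id W) = W by rewrite dom_restr_sub // dom_pg_id.
have [_ /dom_sup_cover] := alg (restr pg_id W).
rewrite dW => /(_ x Wx) [k [ck kW] kx].
exists (dom k); split=> //; [exact/compact_eltP|exact: open_dom|].
by rewrite -dW; exact: kW.1.
Qed.

End symmetric_pseudogroup.

Theorem corollary5p12 (X : topologicalType) :
  hausdorff_space X ->
  ((totally_disconnected [set: X] /\ locally_compact [set: X]) <->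
   algebraic (@intrinsic_le X)).
Proof.
move=> hX; split=> [[td lc]|alg].
  exact: compact_open_base_algebraic (tdlc_compact_open_base hX td lc).
exact: compact_open_base_tdlc hX (algebraic_compact_open_base alg).
Qed.
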